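(* Let $k\ge 3$, let $F$ be a field, let $\Phi$ be a subgroup of $F^*$ of order $k$ with generator $\varphi$, and suppose $(F,\Phi)$ is circular. Let $K$ be any extension field of $F$. Then $(K,\Phi)$ is circular (i.e. $|(\Phi a+b)\cap \Phi c|\le 2$ for all $a,b,c\in K^*$), and $\mathcal{O}_\varphi(K,k)=\mathcal{O}_\varphi(F,k)$.
   Context: Notation: $\mathbf{k}=\{1,\dots,k-1\}$, $\mathbf{k}_0=\{0,1,\dots,k-1\}$. For a field $F$ and a subgroup $\Phi\le F^*$ of order $k$, and $a,b\in F$, put $\Phi a+b=\{\lambda a+b:\lambda\in\Phi\}$. The pair $(F,\Phi)$ is called circular if $|(\Phi a+b)\cap\Phi c|\le 2$ for all $a,b,c\in F^*$. Fix a generator $\varphi$ of $\Phi$. A quadruple $(i,j\mid s,t)$ with $i,j,s,t\in\mathbf{k}$ and $i\neq s$ is an overlap (with respect to $\varphi$) if $\frac{\varphi^j-1}{\varphi^i-1}\in\Phi\cdot\frac{\varphi^t-1}{\varphi^s-1}$, equivalently if there is $\omega\in\mathbf{k}_0$ with $\varphi^\omega(\varphi^j-1)(\varphi^s-1)=(\varphi^i-1)(\varphi^t-1)$. The overlap is trivial if at least one of the congruences $i\equiv\pm j$, $j\equiv\pm t$, $t\equiv\pm s$, $s\equiv\pm i \pmod k$ holds, and nontrivial otherwise. $\mathcal{O}_\varphi(F,k)$ denotes the set of all nontrivial overlaps with respect to $\varphi$. *)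

From mathcomp Require Import all_boot all_order all_algebra.
Set Implicit Arguments. Unset Strict Implicit. Unset Printing Implicit Defensive.
Import GRing.Theory.
Local Open Scope ring_scope.

(* Phi = <phi> = {phi^0, ..., phi^(k-1)} (phi of multiplicative order k). *)
Definition Phi (R : fieldType) (phi : R) (k : nat) : seq R :=
  [seq phi ^+ i | i <- iota 0 k].

Definition Phi_aff (R : fieldType) (phi : R) (k : nat) (a b : R) : seq R :=
  [seq x * a + b | x <- Phi phi k].

Definition Phi_mul (R : fieldType) (phi : R) (k : nat) (c : R) : seq R :=
  [seq x * c | x <- Phi phi k].

Definition circular (R : fieldType) (phi : R) (k : nat) : Prop :=
  forall a b c : R, a != 0 -> b != 0 -> c != 0 ->
    (size (undup [seq x <- Phi_aff phi k a b | x \in Phi_mul phi k c]) <= 2)%N.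

Definition in_k (k i : nat) : bool := (0 < i < k)%N.

Definition overlap (R : fieldType) (phi : R) (k i j s t : nat) : Prop :=
  [/\ [&& in_k k i, in_k k j, in_k k s & in_k k t], i != s &
    (exists2 w : nat, (w < k)%N &
      (phi ^+ j - 1) / (phi ^+ i - 1) = phi ^+ w * ((phi ^+ t - 1) / (phi ^+ s - 1)))].

Definition cong_pm (k x y : nat) : bool :=
  (x == y %[mod k])%N || (x + y == 0 %[mod k])%N.

Definition trivial_quad (k i j s t : nat) : bool :=
  [|| cong_pm k i j, cong_pm k j t, cong_pm k t s | cong_pm k s i].

(* (i, j | s, t) belongs to O_phi(R, k) *)
Definition nontrivial_overlap (R : fieldType) (phi : R) (k i j s t : nat) : Prop :=
  overlap phi k i j s t /\ ~~ trivial_quad k i j s t.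

From mathcomp Require Import all_boot all_order all_algebra.
From mathcomp Require Import ring.
Local Open Scope ring_scope.
Set Implicit Arguments. Unset Strict Implicit. Unset Printing Implicit Defensive.
Import GRing.Theory.

(* Both claims are transported along the (injective) field morphism f : F -> K,
   under which Phi (f phi) k is the image of Phi phi k.

   Circularity: a point x of (Phi a + b) \cap Phi c over K is a pair (p, q) of
   elements of Phi with x = p a + b = q c, i.e. q = p (a/c) + (b/c).  Two such
   pairs with p1 != p2 determine the affine map p |-> p (a/c) + (b/c), so its
   coefficients a/c and b/c are images of elements alpha, beta of F.  Three
   distinct points over K then yield three distinct points of
   (Phi alpha + beta) \cap Phi 1 over F, contradicting circularity of (F, Phi).

   Overlaps: the overlap equation between ratios of powers of phi is preserved
   and reflected by the injective morphism f, and the remaining conditions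
   only involve the integers i, j, s, t.

   Neither transfer needs k > 2 or that phi is a primitive k-th root of unity;
   those hypotheses of the theorem only make Phi phi k the group of order k. *)

Lemma undup_gt2P (T : eqType) (s : seq T) :
  (2 < size (undup s))%N <->
  exists x y z, [/\ x \in s, y \in s & z \in s] /\ [/\ x != y, x != z & y != z].
Proof.
split.
  have U := undup_uniq s.
  case E: (undup s) U => [|x [|y [|z r]]] //= U _.
  exists x, y, z; split; first by split; rewrite -mem_undup E !inE eqxx ?orbT.
  by move: U; rewrite !inE => /andP[/norP[-> /norP[-> _]] /andP[/norP[-> _] _]].
move=> [x [y [z [[hx hy hz] [xy xz yz]]]]].
have U : uniq [:: x; y; z] by rewrite /= !inE negb_or xy xz yz.
apply: (uniq_leq_size U) => w; rewrite !inE mem_undup.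
by move=> /or3P[] /eqP->.
Qed.

Lemma meetP (R : fieldType) (phi : R) (k : nat) (a b c x : R) :
  reflect (exists p q, [/\ p \in Phi phi k, q \in Phi phi k,
                           x = p * a + b & x = q * c])
          (x \in [seq y <- Phi_aff phi k a b | y \in Phi_mul phi k c]).
Proof.
rewrite mem_filter /Phi_aff /Phi_mul; apply: (iffP andP).
  by move=> [/mapP[q hq ->] /mapP[p hp e]]; exists p, q.
by move=> [p [q [hp hq -> e]]]; split; apply/mapP; [exists q | exists p].
Qed.

Lemma Phi_rmorph (F K : fieldType) (f : {rmorphism F -> K}) (phi : F) (k : nat) :
  Phi (f phi) k = map f (Phi phi k).
Proof. by rewrite /Phi -map_comp; apply: eq_map => i; rewrite /= rmorphXn. Qed.

Lemma affine_descent (F K : fieldType) (f : {rmorphism F -> K})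
    (p1 p2 q1 q2 : F) (a b c : K) :
  c != 0 -> p1 != p2 ->
  f p1 * a + b = f q1 * c -> f p2 * a + b = f q2 * c ->
  exists alpha beta : F, f alpha = a / c /\ f beta = b / c.
Proof.
move=> c0 p12 e1 e2.
have fp12 : f p1 - f p2 != 0 by rewrite -rmorphB fmorph_eq0 subr_eq0.
have fq1 : f q1 = (f p1 * a + b) / c by rewrite e1 mulfK.
have fq2 : f q2 = (f p2 * a + b) / c by rewrite e2 mulfK.
pose alpha := (q1 - q2) / (p1 - p2).
have falpha : f alpha = a / c.
  by rewrite fmorph_div !rmorphB fq1 fq2; field; rewrite c0 fp12.
exists alpha, (q1 - p1 * alpha); split=> //.
by rewrite rmorphB rmorphM falpha fq1; field.
Qed.

Lemma circular_rmorph (F K : fieldType) (f : {rmorphism F -> K}) (phi : F) (k : nat) :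
  circular phi k -> circular (f phi) k.
Proof.
move=> circ a b c a0 b0 c0; rewrite leqNgt; apply/negP.
move=> /undup_gt2P [x1 [x2 [x3 [[h1 h2 h3] [x12 x13 x23]]]]].
have lift x : x \in [seq y <- Phi_aff (f phi) k a b | y \in Phi_mul (f phi) k c] ->
    exists p q, [/\ p \in Phi phi k, q \in Phi phi k,
                    x = f p * a + b & x = f q * c].
  move=> /meetP [p' [q' []]]; rewrite Phi_rmorph.
  by move=> /mapP[p hp ->] /mapP[q hq ->] ex ex'; exists p, q.
have [p1 [q1 [hp1 hq1 ex1 ex1']]] := lift _ h1.
have [p2 [q2 [hp2 hq2 ex2 ex2']]] := lift _ h2.
have [p3 [q3 [hp3 hq3 ex3 ex3']]] := lift _ h3.
have e1 : f p1 * a + b = f q1 * c by rewrite -ex1 -ex1'.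
have e2 : f p2 * a + b = f q2 * c by rewrite -ex2 -ex2'.
have e3 : f p3 * a + b = f q3 * c by rewrite -ex3 -ex3'.
have p12 : p1 != p2 by apply: contraNneq x12 => e; rewrite ex1 ex2 e.
have [alpha [beta [falpha fbeta]]] := affine_descent c0 p12 e1 e2.
have descend p q : p \in Phi phi k -> q \in Phi phi k -> f p * a + b = f q * c ->
    q \in [seq y <- Phi_aff phi k alpha beta | y \in Phi_mul phi k 1].
  move=> hp hq e; apply/meetP; exists p, q; split; rewrite ?mulr1 //.
  apply: (fmorph_inj f); rewrite rmorphD rmorphM falpha fbeta.
  by apply: (mulIf c0); rewrite -e; field.
have alpha0 : alpha != 0 by rewrite -(fmorph_eq0 f) falpha mulf_neq0 ?invr_eq0.
have beta0 : beta != 0 by rewrite -(fmorph_eq0 f) fbeta mulf_neq0 ?invr_eq0.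
move: (circ _ _ _ alpha0 beta0 (oner_neq0 F)); rewrite leqNgt => /negP; apply.
apply/undup_gt2P; exists q1, q2, q3; split; split.
- exact: descend hp1 hq1 e1.
- exact: descend hp2 hq2 e2.
- exact: descend hp3 hq3 e3.
- by apply: contraNneq x12 => e; rewrite ex1' ex2' e.
- by apply: contraNneq x13 => e; rewrite ex1' ex3' e.
- by apply: contraNneq x23 => e; rewrite ex2' ex3' e.
Qed.

Lemma overlap_rmorph (F K : fieldType) (f : {rmorphism F -> K}) (phi : F)
    (k i j s t : nat) :
  overlap (f phi) k i j s t <-> overlap phi k i j s t.
Proof.
have ratio m n : (f phi ^+ m - 1) / (f phi ^+ n - 1) =
    f ((phi ^+ m - 1) / (phi ^+ n - 1)).
  by rewrite fmorph_div !rmorphB !rmorphXn !rmorph1.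
rewrite /overlap; split=> -[hk his [w hw e]]; split=> //; exists w => //.
  by apply: (fmorph_inj f); move: e; rewrite !ratio -rmorphXn -rmorphM.
by rewrite !ratio -rmorphXn -rmorphM e.
Qed.

Theorem lemma8 (k : nat) (F K : fieldType) (phi : F) (f : {rmorphism F -> K}) :
  (2 < k)%N -> k.-primitive_root phi -> circular phi k ->
  circular (f phi) k /\
  (forall i j s t : nat,
     nontrivial_overlap (f phi) k i j s t <-> nontrivial_overlap phi k i j s t).
Proof.
move=> _ _ circ; split; first exact: circular_rmorph.
by move=> i j s t; rewrite /nontrivial_overlap overlap_rmorph.
Qed.
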